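(* Let $\beta\in\mathbb{Z}[\mathrm{i}]$ with $|\beta|>1$, let $(\beta,D)$ be an integral numeration system and let $D'\subset\mathbb{Z}[\mathrm{i}]$ be a finite set with $D\subseteq D'$. Then a configuration $(a_z)_{z\in\mathbb{Z}[\mathrm{i}]}$ is $(\beta,D)$-automatic if and only if it is $(\beta,D')$-automatic, i.e. generated by a DFAO with input alphabet $D'$ that is consistent (any two words over $D'$ with the same value $[\cdot]_\beta$ give the same output).
   Context: For $\gamma\in\mathbb{Z}[\mathrm{i}]$ with $|\gamma|>1$ and a finite $D\subset\mathbb{Z}[\mathrm{i}]$ with $0\in D$, a word $w=w_{n-1}\cdots w_0\in D^*$ has value $[w]_\gamma=\sum_{j=0}^{n-1}w_j\gamma^j$; $w$ is a $(\gamma,D)$-expansion of $z$ if $[w]_\gamma=z$. $(\gamma,D)$ is an integral numeration system if every Gaussian integer has a unique $(\gamma,D)$-expansion (up to leading zeros). A DFAO $(S,D,\delta,s_0,A,\tau)$ has finite state set $S$, input alphabet $D$, transition map $\delta:S\times D\to S$ extended to words by $\delta(s,wa)=\delta(\delta(s,w),a)$, initial state $s_0$, output map $\tau:S\to A$. If every $z\in\mathbb{Z}[\mathrm{i}]$ has at least one $(\gamma,D)$-expansion, a configuration $(a_z)$ (map from $\mathbb{Z}[\mathrm{i}]$ to a finite set) is $(\gamma,D)$-automatic if there is a DFAO with input alphabet $D$ such that $a_z=\tau(\delta(s_0,w))$ for every $w\in D^*$ with $[w]_\gamma=z$. *)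

(* Gaussian integers are modelled as the elements z of algC
   (algebraic complex numbers) with integral real and imaginary parts. *)
From HB Require Import structures.
From mathcomp Require Import all_boot all_order all_algebra all_field.
Set Implicit Arguments. Unset Strict Implicit. Unset Printing Implicit Defensive.
Import Order.TTheory GRing.Theory Num.Theory.
Local Open Scope ring_scope.

Definition gaussian (z : algC) : bool :=
  ('Re z \is a Num.int) && ('Im z \is a Num.int).

(* A word w = w_{n-1} ... w_0 is the sequence [:: w_{n-1}; ...; w_0]
   (read left to right by the automaton). Its value is sum_j w_j gamma^j. *)
Definition wval (gamma : algC) (w : seq algC) : algC :=
  \sum_(j < size w) nth 0 (rev w) j * gamma ^+ j.

Definition word_over (D : seq algC) (w : seq algC) : bool := all (mem D) w.

Definition strip0 (w : seq algC) : seq algC :=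
  drop (find (fun d => d != 0) w) w.

Definition integral_numeration (gamma : algC) (D : seq algC) : Prop :=
  (forall z, gaussian z -> exists w, word_over D w /\ wval gamma w = z) /\
  (forall w1 w2, word_over D w1 -> word_over D w2 ->
     wval gamma w1 = wval gamma w2 -> strip0 w1 = strip0 w2).

(* (gamma, D)-automatic configuration a : Z[i] -> A (values of a outside the
   Gaussian integers are irrelevant). *)
Definition automatic (gamma : algC) (D : seq algC) (A : finType)
    (a : algC -> A) : Prop :=
  exists (S : finType) (s0 : S) (delta : S -> algC -> S) (tau : S -> A),
    forall w, word_over D w -> a (wval gamma w) = tau (foldl delta s0 w).

From HB Require Import structures.
From mathcomp Require Import all_boot all_order all_algebra all_field.
From mathcomp Require Import zify ring.
Set Implicit Arguments. Unset Strict Implicit. Unset Printing Implicit Defensive.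
Import Order.TTheory GRing.Theory Num.Theory.
Local Open Scope ring_scope.

(** An automaton over D' simulates one over D by keeping, for every carry c,
    the state the D-automaton reaches on a D-expansion of [u] + c, where u is
    the word read so far.  On reading d in D', write d + c = c' beta + e with
    e in D; then [u d] + c = ([u] + c') beta + e, so the new state for c is one
    D-transition on e from the old state for c'.  Since
    |c'| |beta| <= |c| + |d| + |e|, the carries of norm at most M are closed
    under this step once M (|beta| - 1) bounds |d| + |e|, so finitely many
    Gaussian integers suffice as carries. *)

Lemma wval_nil g : wval g [::] = 0.
Proof. by rewrite /wval big_ord0. Qed.

Lemma wval_rcons g w x : wval g (rcons w x) = wval g w * g + x.
Proof.
rewrite /wval size_rcons big_ord_recl rev_rcons /= expr0 mulr1 addrC.
congr (_ + _); rewrite mulr_suml; apply: eq_bigr => i _.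
by rewrite /bump /= add1n exprSr mulrA.
Qed.

Lemma word_over_rcons D w x :
  word_over D (rcons w x) = word_over D w && (x \in D).
Proof. by rewrite /word_over all_rcons andbC. Qed.

Lemma word_over_sub D D' w : {subset D <= D'} -> word_over D w -> word_over D' w.
Proof. by move=> sDD' /allP wD; apply/allP => x /wD /sDD'. Qed.

Lemma gaussianP z : reflect (exists k l : int, z = k%:~R + 'i * l%:~R) (gaussian z).
Proof.
apply: (iffP andP) => [[/intrP[k hk] /intrP[l hl]] | [k [l ->]]].
  by exists k, l; rewrite {1}(algCrect z) hk hl.
by rewrite Re_rect ?Im_rect ?Rreal_int ?intr_int.
Qed.

Lemma gaussian0 : gaussian 0.
Proof. by apply/gaussianP; exists 0, 0; rewrite mulr0 addr0. Qed.

Lemma gaussianD x y : gaussian x -> gaussian y -> gaussian (x + y).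
Proof. by case/andP=> ? ? /andP[? ?]; rewrite /gaussian !raddfD /= !rpredD. Qed.

Lemma gaussianM x y : gaussian x -> gaussian y -> gaussian (x * y).
Proof.
case/gaussianP=> [k [l ->]] /gaussianP [m [n ->]].
apply/gaussianP; exists (k * m - l * n), (k * n + l * m).
rewrite !rmorphB !rmorphD /= !rmorphM.
have -> : forall a b c d : algC, (a + 'i * b) * (c + 'i * d)
    = a * c + 'i * (a * d + b * c) + 'i ^+ 2 * (b * d) by move=> *; ring.
by rewrite sqrCi; ring.
Qed.

Lemma gaussian_wval g w : gaussian g -> all gaussian w -> gaussian (wval g w).
Proof.
move=> gg; elim/last_ind: w => [|w x IH]; first by rewrite wval_nil gaussian0.
rewrite all_rcons wval_rcons => /andP[gx /IH gw].
exact: gaussianD (gaussianM gw gg) gx.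
Qed.

Definition int_range (M : nat) : seq int :=
  [seq n%:Z - M%:Z | n <- iota 0 (M + M).+1].

Definition gaussian_box (M : nat) : seq algC :=
  [seq k%:~R + 'i * l%:~R | k <- int_range M, l <- int_range M].

Lemma mem_int_range M (k : int) : - (M%:Z) <= k <= M%:Z -> k \in int_range M.
Proof.
case/andP=> lo hi; apply/mapP; exists (absz (k + M%:Z)); last by lia.
by rewrite mem_iota add0n ltnS; lia.
Qed.

Lemma gaussian_box_gaussian M z : z \in gaussian_box M -> gaussian z.
Proof. by case/allpairsP=> [[k l] [_ _ ->]]; apply/gaussianP; exists k, l. Qed.

Lemma gaussian_box_complete M z :
  gaussian z -> `|z| <= M%:R -> z \in gaussian_box M.
Proof.
case/gaussianP=> [k [l ->]] zM.
have norm2 : `|k%:~R + 'i * l%:~R : algC| ^+ 2 = (k * k + l * l)%:~R.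
  rewrite normC2_Re_Im Re_rect ?Im_rect ?Rreal_int ?intr_int //.
  by rewrite !expr2 rmorphD /= !rmorphM.
have kl : (k * k + l * l <= (M * M)%N%:Z)%R.
  rewrite -(ler_int algC) -norm2 expr2 (le_trans (ler_pM _ _ zM zM)) //.
  by rewrite -natrM.
apply/allpairsP; exists (k, l).
by split=> //=; apply: mem_int_range; apply/andP; split; nia.
Qed.

Lemma expansion_divmod beta D : 0 \in D -> gaussian beta -> all gaussian D ->
  (forall z, gaussian z -> exists w, word_over D w /\ wval beta w = z) ->
  forall z, gaussian z -> exists q e, [/\ e \in D, gaussian q & z = q * beta + e].
Proof.
move=> D0 gbeta gD expand z /expand [w [wD <-]].
case/lastP: w wD => [|u e]; first by exists 0, 0; rewrite wval_nil mul0r addr0 gaussian0.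
rewrite word_over_rcons wval_rcons => /andP[uD eD]; exists (wval beta u), e.
split=> //; apply: gaussian_wval => //; apply/allP => x /(allP uD).
exact: (allP gD).
Qed.

Lemma norm_le_sum (R : numDomainType) (s : seq R) x :
  x \in s -> `|x| <= \sum_(y <- s) `|y|.
Proof.
elim: s => // y s IH; rewrite inE big_cons => /orP[/eqP-> | /IH xs].
  by rewrite lerDl sumr_ge0.
by rewrite (le_trans xs) ?lerDr.
Qed.

Lemma carry_norm_bound (R : numDomainType) (beta c d e q K M : R) :
  1 < `|beta| -> `|c| <= M -> `|d| + `|e| <= K -> K <= M * (`|beta| - 1) ->
  d + c = q * beta + e -> `|q| <= M.
Proof.
move=> beta1 cM deK KM eq_dc.
have beta0 : 0 < `|beta| by apply: lt_trans beta1.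
rewrite -(ler_pM2r beta0) -normrM.
have -> : q * beta = d + c - e by rewrite eq_dc addrK.
apply: le_trans (ler_normB _ _) _; apply: le_trans (lerD (ler_normD _ _) (lexx _)) _.
have -> : M * `|beta| = M * (`|beta| - 1) + M by ring.
by rewrite addrAC lerD // (le_trans deK).
Qed.

Definition carry_closed beta (D D' cs : seq algC) : Prop :=
  forall c d, c \in cs -> d \in D' ->
    exists q e, [/\ q \in cs, e \in D & d + c = q * beta + e].

Lemma exists_carry_set beta D D' :
  gaussian beta -> 1 < `|beta| -> all gaussian D -> 0 \in D ->
  (forall z, gaussian z -> exists w, word_over D w /\ wval beta w = z) ->
  all gaussian D' ->
  exists cs, [/\ 0 \in cs, all gaussian cs & carry_closed beta D D' cs].
Proof.
move=> gbeta beta1 gD D0 expand gD'.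
pose K := \sum_(y <- D') `|y| + \sum_(y <- D) `|y|.
have beta1_gt0 : 0 < `|beta| - 1 by rewrite subr_gt0.
have [M KM] : exists M : nat, K / (`|beta| - 1) < M%:R.
  exists (Num.Def.archi_bound (K / (`|beta| - 1))); apply: archi_boundP.
  by rewrite divr_ge0 ?(ltW beta1_gt0) // /K addr_ge0 ?sumr_ge0.
rewrite ltr_pdivrMr // in KM.
exists [seq z <- gaussian_box M | `|z| <= M%:R]; split.
- by rewrite mem_filter normr0 ler0n gaussian_box_complete ?gaussian0 ?normr0.
- by apply/allP => z; rewrite mem_filter => /andP[_ /gaussian_box_gaussian].
move=> c d; rewrite mem_filter => /andP[cM /gaussian_box_gaussian gc] dD'.
have gd : gaussian d by apply: (allP gD').
have [q [e [eD gq eq_dc]]] := expansion_divmod D0 gbeta gD expand (gaussianD gd gc).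
have qM : `|q| <= M%:R.
  apply: carry_norm_bound beta1 cM _ (ltW KM) eq_dc.
  exact: lerD (norm_le_sum dD') (norm_le_sum eD).
by exists q, e; rewrite mem_filter qM gaussian_box_complete.
Qed.

Section CarryAutomaton.

Variables (beta : algC) (D D' cs : seq algC).
Hypothesis cs0 : 0 \in cs.
Hypothesis cs_closed : carry_closed beta D D' cs.
Hypothesis cs_expand : forall c, c \in cs -> exists w, word_over D w && (wval beta w == c).

Local Notation carry := (seq_sub cs).

Definition carry_zero : carry := SeqSub cs0.

(** Junk value [None] only for digits outside D'. *)
Definition carry_step (c : carry) (d : algC) : option (carry * seq_sub D) :=
  [pick p : carry * seq_sub D | d + val c == val p.1 * beta + val p.2].

Lemma carry_stepP c d : d \in D' -> exists q e,
  carry_step c d = Some (q, e) /\ d + val c = val q * beta + val e.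
Proof.
move=> dD'; rewrite /carry_step; case: pickP => [[q e] /eqP | no_step].
  by exists q, e.
have [q [e [qcs eD eq_dc]]] := cs_closed (ssvalP c) dD'.
by have := no_step (SeqSub qcs, SeqSub eD); rewrite /= eq_dc eqxx.
Qed.

Section Simulation.

Variables (S : finType) (s0 : S) (delta : S -> algC -> S).

Definition carry_start : {ffun carry -> S} :=
  [ffun c => foldl delta s0 (xchoose (cs_expand (ssvalP c)))].

Definition carry_delta (T : {ffun carry -> S}) (d : algC) : {ffun carry -> S} :=
  [ffun c => if carry_step c d is Some (q, e) then delta (T q) (val e) else T c].

Lemma foldl_carry_delta u : word_over D' u -> forall c : carry,
  exists2 y, word_over D y & wval beta y = wval beta u + val c /\
    foldl carry_delta carry_start u c = foldl delta s0 y.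
Proof.
elim/last_ind: u => [_ c | u d IH]; rewrite ?word_over_rcons.
  have /andP[yD /eqP y_c] := xchooseP (cs_expand (ssvalP c)).
  by exists (xchoose (cs_expand (ssvalP c))); rewrite // wval_nil add0r ffunE.
case/andP=> /IH simulate dD' c; have [q [e [step eq_dc]]] := carry_stepP c dD'.
have [y yD [yq fold_q]] := simulate q.
exists (rcons y (val e)); first by rewrite word_over_rcons yD ssvalP.
rewrite !wval_rcons !foldl_rcons ffunE step fold_q yq; split=> //.
by rewrite mulrDl -addrA -eq_dc addrA.
Qed.

End Simulation.

Lemma automatic_carry_closed (A : finType) (a : algC -> A) :
  automatic beta D a -> automatic beta D' a.
Proof.
case=> S [s0 [delta [tau a_tau]]].
exists {ffun carry -> S}; exists (carry_start s0 delta), (carry_delta delta).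
exists (fun T : {ffun carry -> S} => tau (T carry_zero)) => w wD'.
have [y yD [yw ->]] := foldl_carry_delta s0 delta wD' carry_zero.
by rewrite -a_tau // yw /= addr0.
Qed.

End CarryAutomaton.

Lemma automatic_subset beta D D' (A : finType) (a : algC -> A) :
  {subset D <= D'} -> automatic beta D' a -> automatic beta D a.
Proof.
move=> sDD' [S [s0 [delta [tau a_tau]]]].
by exists S, s0, delta, tau => w /(word_over_sub sDD'); apply: a_tau.
Qed.

Theorem proposition2p7 (beta : algC) (D D' : seq algC) (A : finType)
    (a : algC -> A) :
  gaussian beta -> 1 < `|beta| ->
  all gaussian D -> 0 \in D -> integral_numeration beta D ->
  all gaussian D' -> {subset D <= D'} ->
  automatic beta D a <-> automatic beta D' a.
Proof.
move=> gbeta beta1 gD D0 [expand _] gD' sDD'.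
split; last exact: automatic_subset.
have [cs [cs0 gcs cs_closed]] := exists_carry_set gbeta beta1 gD D0 expand gD'.
apply: (automatic_carry_closed cs0 cs_closed) => c /(allP gcs) /expand[w [wD <-]].
by exists w; rewrite wD eqxx.
Qed.
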